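(* Let $A$ and $B$ be commutative associative unital algebras over $\mathbb{C}$ or $\mathbb{R}$, let $\mathbf{f}_1,\dots,\mathbf{f}_r\colon A\to B$ be unital algebra homomorphisms, and let $n_1,\dots,n_r\in\mathbb{Z}$. Put $\mathbf{f}=\sum_{\alpha}n_\alpha\mathbf{f}_\alpha$, $p=\sum_{n_\alpha>0}n_\alpha$ and $q=-\sum_{n_\alpha<0}n_\alpha$. Then $\mathbf{f}$ is a $p|q$-homomorphism, with $\mathbf{f}(1)=\sum_\alpha n_\alpha=p-q$.
   Context: For a linear map $\mathbf{f}\colon A\to B$, its characteristic function is the formal power series $R(\mathbf{f},a,z)=\exp\bigl(\mathbf{f}(\ln(1+az))\bigr)\in B[[z]]$, where $\ln(1+az)=\sum_{k\ge1}(-1)^{k-1}a^kz^k/k$ and $\mathbf{f}$ is applied coefficientwise. A linear map $\mathbf{f}$ is called a $p|q$-homomorphism if for every $a\in A$, $R(\mathbf{f},a,z)$ is a rational function of $z$ representable as a ratio $P_a(z)/Q_a(z)$ of polynomials $P_a,Q_a\in B[z]$ of degrees $p$ and $q$ respectively, with $Q_a(0)=1$ (the ratio understood as a formal power series). *)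

From HB Require Import structures.
From mathcomp Require Import all_boot all_order all_algebra.
Set Implicit Arguments. Unset Strict Implicit. Unset Printing Implicit Defensive.
Import Order.TTheory GRing.Theory Num.Theory.
Local Open Scope ring_scope.

(* Formal power series B[[z]] are represented by their coefficient
   sequences nat -> B. *)
Section PowerSeries.
Variables (K : numFieldType) (B : comAlgType K).

Definition fps_mul (s t : nat -> B) : nat -> B :=
  fun n => \sum_(i < n.+1) s i * t (n - i)%N.

Definition fps_one : nat -> B := fun n => if n is 0%N then 1 else 0.

Fixpoint fps_pow (s : nat -> B) (k : nat) : nat -> B :=
  if k is k'.+1 then fps_mul s (fps_pow s k') else fps_one.

(* exp(g) = sum_k g^k / k!, for a series g with zero constant term
   (the coefficient of z^n only receives contributions from k <= n). *)
Definition fps_exp (g : nat -> B) : nat -> B :=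
  fun n => \sum_(k < n.+1) ((k`!)%:R : K)^-1 *: fps_pow g k n.

Definition fps_of_poly (P : {poly B}) : nat -> B := fun n => P`_n.
End PowerSeries.

Definition fps_ln1p (K : numFieldType) (A : comAlgType K) (a : A) : nat -> A :=
  fun k => if k is 0%N then 0 else (((-1) ^+ k.-1 / k%:R : K) *: a ^+ k).

Definition charfun (K : numFieldType) (A B : comAlgType K) (f : A -> B) (a : A)
  : nat -> B :=
  fps_exp (fun k => f (fps_ln1p a k)).

(* f is a p|q-homomorphism: a linear map such that for every a,
   R(f,a,z) = P_a(z)/Q_a(z) with deg P_a <= p, deg Q_a <= q, Q_a(0) = 1;
   the ratio is understood in B[[z]], i.e. R(f,a,z) * Q_a(z) = P_a(z). *)
Definition pq_hom (K : numFieldType) (A B : comAlgType K) (f : A -> B)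
  (p q : nat) : Prop :=
  linear f /\
  forall a : A, exists P Q : {poly B},
    [/\ (size P <= p.+1)%N, (size Q <= q.+1)%N, Q`_0 = 1 &
        forall n, fps_mul (charfun f a) (fps_of_poly Q) n = P`_n].

From HB Require Import structures.
From mathcomp Require Import all_boot all_order all_algebra zify.
Set Implicit Arguments. Unset Strict Implicit. Unset Printing Implicit Defensive.
Import Order.TTheory GRing.Theory Num.Theory.
Local Open Scope ring_scope.

(* For an algebra homomorphism F the characteristic function is
   exp(ln(1 + F(a) z)) = 1 + F(a) z, and exp turns sums into products, so
   R(sum_i n_i F_i, a, z) = prod_i (1 + F_i(a) z)^(n_i): the factors with
   n_i > 0 give a numerator of degree p, those with n_i < 0 a denominator of
   degree q and constant term 1.  Series are compared through their
   truncations modulo z^(n+1); both exp(G + H) = exp G exp H and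
   exp(ln(1 + b z)) = 1 + b z follow from uniqueness of the solution of
   Y' = U Y with given Y(0), which holds in characteristic 0. *)

Section TruncatedEquality.
Variable R : nzRingType.
Implicit Types p q : {poly R}.

Definition eqmodX (n : nat) p q := forall j, (j < n)%N -> p`_j = q`_j.

Lemma eqmodX_refl n p : eqmodX n p p. Proof. by []. Qed.

Lemma eqmodX_sym n p q : eqmodX n p q -> eqmodX n q p.
Proof. by move=> h j hj; rewrite h. Qed.

Lemma eqmodX_trans n p q r : eqmodX n p q -> eqmodX n q r -> eqmodX n p r.
Proof. by move=> h1 h2 j hj; rewrite h1 // h2. Qed.

Lemma eqmodXD n p p' q q' :
  eqmodX n p p' -> eqmodX n q q' -> eqmodX n (p + q) (p' + q').
Proof. by move=> h1 h2 j hj; rewrite !coefD h1 // h2. Qed.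

Lemma eqmodXM n p p' q q' :
  eqmodX n p p' -> eqmodX n q q' -> eqmodX n (p * q) (p' * q').
Proof.
move=> h1 h2 j hj; rewrite !coefM; apply: eq_bigr => i _.
rewrite h1 ?h2 //; apply: leq_ltn_trans hj; first exact: leq_subr.
by rewrite -ltnS.
Qed.

Lemma eqmodXX n p q k : eqmodX n p q -> eqmodX n (p ^+ k) (q ^+ k).
Proof. by move=> h; elim: k => // k IH; rewrite !exprS; apply: eqmodXM. Qed.

Lemma eqmodX_prod n (I : Type) (s : seq I) (P : pred I) (F G : I -> {poly R}) :
  (forall i, P i -> eqmodX n (F i) (G i)) ->
  eqmodX n (\prod_(i <- s | P i) F i) (\prod_(i <- s | P i) G i).
Proof.
move=> h; elim/big_rec2: _ => // i y1 y2 Pi hy.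
by apply: eqmodXM => //; apply: h.
Qed.

Lemma size_prod_leq (I : Type) (s : seq I) (P : pred I) (F : I -> {poly R})
    (d : I -> nat) :
  (forall i, P i -> size (F i) <= (d i).+1)%N ->
  (size (\prod_(i <- s | P i) F i)%R <= (\sum_(i <- s | P i) d i).+1)%N.
Proof.
move=> h; elim/big_rec2: _ => [|i m p Pi hp]; first by rewrite size_poly1.
apply: leq_trans (size_polyMleq _ _) _.
by move: (h i Pi) hp; lia.
Qed.

Lemma coef0_expr_lt p k i : p`_0 = 0 -> (i < k)%N -> (p ^+ k)`_i = 0.
Proof.
move=> p0; elim: k i => [|k IH] i hi //.
rewrite exprS coefM big1 // => -[[|j] hj] _ /=; first by rewrite p0 mul0r.
by rewrite IH ?mulr0 //; lia.
Qed.

End TruncatedEquality.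

Definition pos_part (N : int) : nat := if (0 < N) then absz N else 0%N.
Definition neg_part (N : int) : nat := if (N < 0) then absz N else 0%N.

Lemma pos_partBneg_part N : (pos_part N)%:Z - (neg_part N)%:Z = N.
Proof.
by rewrite /pos_part /neg_part; case: N => -[|k] //=; rewrite ?subr0 // NegzE sub0r.
Qed.

Lemma mulrz_addn_neg_part (V : zmodType) (x : V) N :
  x *~ N + x *+ neg_part N = x *+ pos_part N.
Proof. by rewrite -{1}[N]pos_partBneg_part mulrzBl_nat subrK. Qed.

Section TruncatedExp.
Variables (K : numFieldType) (B : comAlgType K).
Implicit Types (b : B) (G H U D Y Z : {poly B}).

Lemma mulrSn_eq0 k (x : B) : x *+ k.+1 = 0 -> x = 0.
Proof.
by rewrite -scaler_nat => /eqP; rewrite scaler_eq0 pnatr_eq0 orFb => /eqP.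
Qed.

Lemma linear_ode_uniq n U D :
  D`_0 = 0 -> eqmodX n D^`() (U * D) -> eqmodX n.+1 D 0.
Proof.
move=> D0 hD; suff: forall m, (m <= n)%N -> eqmodX m.+1 D 0 by apply.
elim=> [|m IH] hm j; rewrite ltnS; first by rewrite leqn0 coef0 => /eqP->.
rewrite leq_eqVlt => /orP[/eqP->|]; last exact: IH (ltnW hm) j.
rewrite coef0; apply: (mulrSn_eq0 (k := m)).
rewrite -coef_deriv hD // coefM big1 // => i _.
by rewrite IH ?coef0 ?mulr0 // ?(ltnW hm) // ltnS leq_subr.
Qed.

Lemma ode_uniq n U Y Z : Y`_0 = Z`_0 ->
  eqmodX n Y^`() (U * Y) -> eqmodX n Z^`() (U * Z) -> eqmodX n.+1 Y Z.
Proof.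
move=> YZ0 hY hZ j hj; apply/eqP; rewrite -subr_eq0 -coefB.
rewrite (@linear_ode_uniq n U (Y - Z)) ?coef0 ?coefB ?YZ0 ?subrr // => i hi.
by rewrite derivB mulrBr !coefB hY // hZ.
Qed.

Definition invfact (k : nat) : B := ((k`!)%:R^-1 : K) *: 1.

Lemma invfact0 : invfact 0 = 1.
Proof. by rewrite /invfact fact0 invr1 scale1r. Qed.

Lemma invfactS k : invfact k.+1 *+ k.+1 = invfact k.
Proof.
rewrite /invfact scalerMnl; congr (_ *: _).
have k1_neq0 : (k.+1%:R : K) != 0 by rewrite pnatr_eq0.
by rewrite factS natrM invfM -mulr_natr mulrAC mulVf // mul1r.
Qed.

(* exp(G) truncated to the terms G^k with k <= n; for G`_0 = 0 the omitted
   terms do not contribute below degree n + 1. *)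
Definition expt n G : {poly B} := \sum_(k < n.+1) invfact k *: G ^+ k.

Lemma expt0 n : expt n 0 = 1.
Proof.
rewrite /expt big_ord_recl expr0 invfact0 scale1r big1 ?addr0 // => i _.
by rewrite expr0n scaler0.
Qed.

Lemma coef0_expt n G : G`_0 = 0 -> (expt n G)`_0 = 1.
Proof.
move=> G0; rewrite /expt coef_sum big_ord_recl expr0 coefZ coef1 mulr1 invfact0.
by rewrite big1 ?addr0 // => i _; rewrite coefZ coef0_expr_lt ?mulr0.
Qed.

Lemma deriv_expt n G : G`_0 = 0 -> eqmodX n (expt n G)^`() (G^`() * expt n G).
Proof.
move=> G0.
have -> : (expt n G)^`() = G^`() * \sum_(k < n) invfact k *: G ^+ k.
  rewrite /expt raddf_sum big_ord_recl /= derivZ expr0 derivC scaler0 add0r.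
  rewrite mulr_sumr; apply: eq_bigr => i _.
  by rewrite derivZ deriv_exp -scalerMnr scalerMnl invfactS scalerAr.
rewrite /expt big_ord_recr mulrDr => j hj /=.
rewrite coefD [X in _ = _ + X]coefM [X in _ = _ + X]big1 ?addr0 // => i _.
by rewrite coefZ coef0_expr_lt ?mulr0 // (leq_ltn_trans (leq_subr _ _) hj).
Qed.

Lemma exptD n G H : G`_0 = 0 -> H`_0 = 0 ->
  eqmodX n.+1 (expt n (G + H)) (expt n G * expt n H).
Proof.
move=> G0 H0; have GH0 : (G + H)`_0 = 0 by rewrite coefD G0 H0 addr0.
apply: (@ode_uniq n (G + H)^`()); first by rewrite coef0M !coef0_expt ?mulr1.
  exact: deriv_expt.
rewrite derivM.
apply: (eqmodX_trans
  (q := G^`() * expt n G * expt n H + expt n G * (H^`() * expt n H))).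
  exact: eqmodXD (eqmodXM (deriv_expt G0) (eqmodX_refl _))
                 (eqmodXM (eqmodX_refl _) (deriv_expt H0)).
by move=> j _; rewrite derivD mulrDl mulrCA -!mulrA.
Qed.

Lemma expt_sum n (I : Type) (s : seq I) (P : pred I) (F : I -> {poly B}) :
  (forall i, P i -> (F i)`_0 = 0) ->
  eqmodX n.+1 (expt n (\sum_(i <- s | P i) F i)) (\prod_(i <- s | P i) expt n (F i)).
Proof.
move=> F0; suff [] : (\sum_(i <- s | P i) F i)`_0 = 0 /\
  eqmodX n.+1 (expt n (\sum_(i <- s | P i) F i)) (\prod_(i <- s | P i) expt n (F i)).
  by [].
elim/big_rec2: _ => [|i G E Pi [G0 hE]]; first by rewrite coef0 expt0.
split; first by rewrite coefD F0 ?G0 ?addr0.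
exact: eqmodX_trans (exptD (F0 i Pi) G0) (eqmodXM (eqmodX_refl _) hE).
Qed.

Lemma expt_muln n G k : G`_0 = 0 -> eqmodX n.+1 (expt n (G *+ k)) (expt n G ^+ k).
Proof.
move=> G0.
have := @expt_sum n _ (index_iota 0 k) (fun=> true) (fun=> G) (fun _ _ => G0).
by rewrite sumr_const_nat prodr_const_nat subn0.
Qed.

Definition logt n b : {poly B} := \poly_(k < n.+1) fps_ln1p b k.

Lemma coef0_logt n b : (logt n b)`_0 = 0.
Proof. by rewrite coef_poly. Qed.

Lemma coef_deriv_logt n b j :
  (j < n)%N -> (logt n b)^`()`_j = ((-1) ^+ j : K) *: b ^+ j.+1.
Proof.
move=> hj; rewrite coef_deriv coef_poly ltnS hj /= scalerMnl.
have j1_neq0 : (j.+1%:R : K) != 0 by rewrite pnatr_eq0.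
by rewrite -mulr_natr mulfVK.
Qed.

Lemma expt_logt n b : eqmodX n.+1 (expt n (logt n b)) (1 + b *: 'X).
Proof.
apply: (@ode_uniq n (logt n b)^`()).
- by rewrite coef0_expt ?coef0_logt // coefD coef1 coefZ coefX mulr0 addr0.
- exact/deriv_expt/coef0_logt.
move=> j hj.
rewrite derivD derivC derivZ derivX add0r mulrDr mulr1 -scalerAr.
rewrite coefD !coefZ coefMX coef1 coef_deriv_logt //.
case: j hj => [|j] hj /=; first by rewrite expr0 scale1r mulr1 mulr0 addr0.
rewrite coef_deriv_logt ?(ltnW hj) // mulr0 -scalerAr -exprS.
by rewrite exprS mulN1r scaleNr addNr.
Qed.

Lemma size_linear_expr b k : (size ((1 + b *: 'X) ^+ k)%R <= k.+1)%N.
Proof.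
apply: leq_trans (size_poly_exp_leq _ _) _; rewrite ltnS.
have : (size (1 + b *: 'X)%R <= 2)%N.
  rewrite (leq_trans (size_polyD _ _)) // geq_max size_poly1.
  by rewrite (leq_trans (size_scale_leq _ _)) ?size_polyX.
by case: (size _) => [|[|[|m]]] //= _; rewrite ?mul0n ?mul1n.
Qed.

Lemma coef0_linear_expr b k : ((1 + b *: 'X) ^+ k)`_0 = 1.
Proof.
by rewrite -[LHS]/(coefp 0 _) rmorphXn /= coefD coef1 coefZ coefX mulr0 addr0 expr1n.
Qed.

Lemma expt_logt_muln n b k :
  eqmodX n.+1 (expt n (logt n b *+ k)) ((1 + b *: 'X) ^+ k).
Proof.
exact: eqmodX_trans (expt_muln k (coef0_logt n b)) (eqmodXX k (expt_logt b)).
Qed.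

Lemma expt_lincomb_logt n (I : finType) (b : I -> B) (N : I -> int) :
  eqmodX n.+1
    (expt n (\sum_i logt n (b i) *~ N i) * \prod_i (1 + b i *: 'X) ^+ neg_part (N i))
    (\prod_i (1 + b i *: 'X) ^+ pos_part (N i)).
Proof.
have expt_sum_logt (c : I -> nat) : eqmodX n.+1
    (expt n (\sum_i logt n (b i) *+ c i)) (\prod_i (1 + b i *: 'X) ^+ c i).
  apply: eqmodX_trans (expt_sum _ _) (eqmodX_prod _ _) => i _.
    by rewrite coefMn coef0_logt mul0rn.
  exact: expt_logt_muln.
have G0 : (\sum_i logt n (b i) *~ N i)`_0 = 0.
  by rewrite coef_sum big1 // => i _; rewrite coefMrz coef0_logt mul0rz.
have H0 : (\sum_i logt n (b i) *+ neg_part (N i))`_0 = 0.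
  by rewrite coef_sum big1 // => i _; rewrite coefMn coef0_logt mul0rn.
apply: eqmodX_trans (eqmodXM (eqmodX_refl _) (eqmodX_sym (expt_sum_logt _))) _.
apply: eqmodX_trans (eqmodX_sym (exptD G0 H0)) _.
rewrite -big_split /=; under eq_bigr do rewrite mulrz_addn_neg_part.
exact: expt_sum_logt.
Qed.

Lemma fps_pow_poly (g : nat -> B) m k i :
  (i < m)%N -> fps_pow g k i = ((\poly_(j < m) g j) ^+ k)`_i.
Proof.
elim: k i => [|k IH] i hi /=; first by rewrite expr0 coef1; case: i hi.
rewrite exprS coefM; apply: eq_bigr => j _.
rewrite coef_poly (leq_ltn_trans _ hi) ?IH ?(leq_ltn_trans (leq_subr _ _) hi) //.
by rewrite -ltnS.
Qed.

Lemma fps_exp_expt (g : nat -> B) n i : g 0%N = 0 -> (i <= n)%N ->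
  fps_exp g i = (expt n (\poly_(j < n.+1) g j))`_i.
Proof.
move=> g0 hi; rewrite /fps_exp /expt coef_sum.
rewrite (big_ord_widen n.+1 (fun k => ((k`!)%:R : K)^-1 *: fps_pow g k i)) //.
rewrite big_mkcond; apply: eq_bigr => k _.
rewrite coefZ /invfact -scalerAl mul1r (@fps_pow_poly g n.+1) ?ltnS //.
case: ifP => // /negbT; rewrite -ltnNge => ik.
by rewrite coef0_expr_lt ?coef_poly ?scaler0.
Qed.

Variable A : comAlgType K.

Lemma lrmorph_ln1p (F : {lrmorphism A -> B}) a k :
  F (fps_ln1p a k) = fps_ln1p (F a) k.
Proof. by case: k => [|k] /=; rewrite ?raddf0 // linearZ rmorphXn. Qed.

Lemma charfun_lincomb (I : finType) (F : I -> {lrmorphism A -> B}) (N : I -> int)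
    a n i : (i <= n)%N ->
  charfun (fun x => \sum_j F j x *~ N j) a i
  = (expt n (\sum_j logt n (F j a) *~ N j))`_i.
Proof.
move=> hi; rewrite /charfun (fps_exp_expt _ hi); last first.
  by rewrite big1 // => j _; rewrite raddf0 mul0rz.
congr (expt n _)`_i; apply/polyP => k; rewrite coef_poly coef_sum.
under [RHS]eq_bigr do rewrite coefMrz coef_poly.
case: ifP => _; last by rewrite big1 // => j _; rewrite mul0rz.
by apply: eq_bigr => j _; rewrite lrmorph_ln1p.
Qed.

End TruncatedExp.

Theorem mainTheorem4 (K : numFieldType) (A B : comAlgType K) (r : nat)
  (F : 'I_r -> {lrmorphism A -> B}) (N : 'I_r -> int) :
  let f := fun x : A => \sum_(i < r) (F i x) *~ N i in
  let p := (\sum_(i < r | (0 < N i)%R) absz (N i))%N in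
  let q := (\sum_(i < r | (N i < 0)%R) absz (N i))%N in
  pq_hom f p q /\ f 1 = (\sum_(i < r) N i)%:~R /\ f 1 = (p%:Z - q%:Z)%:~R.
Proof.
move=> f p q.
have p_pos : p = (\sum_i pos_part (N i))%N by rewrite /p big_mkcond.
have q_neg : q = (\sum_i neg_part (N i))%N by rewrite /q big_mkcond.
have f1 : f 1 = (\sum_i N i)%:~R.
  by rewrite /f mulrz_sumr; apply: eq_bigr => i _; rewrite rmorph1.
have sumN : \sum_i N i = p%:Z - q%:Z.
  rewrite p_pos q_neg !(big_morph Posz PoszD (erefl 0%:Z)) -sumrB.
  by apply: eq_bigr => i _; rewrite pos_partBneg_part.
split; last by rewrite f1 sumN.
split=> [c x y|a].
  rewrite /f scaler_sumr -big_split; apply: eq_bigr => i _.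
  by rewrite linearP mulrzDl scalerMzr.
pose Y i := 1 + F i a *: 'X.
exists (\prod_i Y i ^+ pos_part (N i)), (\prod_i Y i ^+ neg_part (N i)).
split=> [|||n].
- by rewrite p_pos; apply: size_prod_leq => i _; apply: size_linear_expr.
- by rewrite q_neg; apply: size_prod_leq => i _; apply: size_linear_expr.
- by rewrite coef0_prod big1 // => i _; apply: coef0_linear_expr.
rewrite -(expt_lincomb_logt (n := n) (fun i => F i a) N (leqnn n.+1)) coefM.
by apply: eq_bigr => i _; rewrite (@charfun_lincomb _ _ _ _ F N a n) // -ltnS.
Qed.
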